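(* Let $h:H\to K$ be an isomorphism between subgroups of a group $G$, and $\mathcal F\subset\mathcal P_G$ an $h$-invariant left-invariant lower family. If $A\subset H$ and $A\notin\tau^\alpha(\mathcal F)$ for some ordinal $\alpha$, then $h(A)\cup z\,h(A)\notin\tau^{\alpha+1}(\mathcal F)$ for every $z\in G\setminus\{e\}$.
   Context: $\mathcal F$ is $h$-invariant if for every $A\subset H$: $A\in\mathcal F$ iff $h(A)\in\mathcal F$. Left-invariant: $xF\in\mathcal F$ for $F\in\mathcal F$, $x\in G$; lower: closed under subsets. $\tau(\mathcal F)=\{A\subset G: xA\cap yA\in\mathcal F$ for all distinct $x,y\in G\}$, $\tau^0(\mathcal F)=\mathcal F$, $\tau^{<\alpha}(\mathcal F)=\bigcup_{\beta<\alpha}\tau^\beta(\mathcal F)$, $\tau^\alpha(\mathcal F)=\tau(\tau^{<\alpha}(\mathcal F))$ for $\alpha>0$. *)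

Definition set (G : Type) := G -> Prop.
Definition family (G : Type) := set G -> Prop.

Definition is_group {G : Type} (mul : G -> G -> G) (e : G) (inv : G -> G) :=
  (forall x y z, mul x (mul y z) = mul (mul x y) z) /\
  (forall x, mul e x = x) /\ (forall x, mul x e = x) /\
  (forall x, mul (inv x) x = e) /\ (forall x, mul x (inv x) = e).

Definition is_subgroup {G : Type} (mul : G -> G -> G) (e : G) (inv : G -> G)
  (H : set G) :=
  H e /\ (forall x y, H x -> H y -> H (mul x y)) /\ (forall x, H x -> H (inv x)).

Definition is_iso_between {G : Type} (mul : G -> G -> G) (H K : set G)
  (h : G -> G) :=
  (forall x, H x -> K (h x)) /\
  (forall x y, H x -> H y -> h x = h y -> x = y) /\
  (forall y, K y -> exists x, H x /\ h x = y) /\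
  (forall x y, H x -> H y -> h (mul x y) = mul (h x) (h y)).

Definition image {G : Type} (h : G -> G) (A : set G) : set G :=
  fun y => exists x, A x /\ h x = y.

Definition ltrans {G : Type} (mul : G -> G -> G) (x : G) (A : set G) : set G :=
  fun y => exists a, A a /\ y = mul x a.

Definition inter {G : Type} (A B : set G) : set G := fun y => A y /\ B y.
Definition union {G : Type} (A B : set G) : set G := fun y => A y \/ B y.
Definition subset {G : Type} (A B : set G) := forall y, A y -> B y.

Definition h_invariant {G : Type} (H : set G) (h : G -> G) (F : family G) :=
  forall A, subset A H -> (F A <-> F (image h A)).

Definition left_invariant {G : Type} (mul : G -> G -> G) (F : family G) :=
  forall x A, F A -> F (ltrans mul x A).

Definition lower {G : Type} (F : family G) :=
  forall A B, F A -> subset B A -> F B.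

Definition tau {G : Type} (mul : G -> G -> G) (F : family G) : family G :=
  fun A => forall x y, x <> y -> F (inter (ltrans mul x A) (ltrans mul y A)).

(* Ordinals are represented by elements of a well-ordered type (O, lt).
   Transfinite iteration, by well-founded recursion:
     tau^a(F) = F                      if a is the least element (a = 0),
     tau^a(F) = tau(tau^{<a}(F))       if a > 0,
   where tau^{<a}(F) = union over b < a of tau^b(F). *)
Definition is_well_order {O : Type} (lt : O -> O -> Prop) :=
  well_founded lt /\
  (forall a b c, lt a b -> lt b c -> lt a c) /\
  (forall a b, lt a b \/ a = b \/ lt b a).

Definition tau_iter_step {G O : Type} (mul : G -> G -> G) (F : family G)
  (lt : O -> O -> Prop) (a : O) (rec : forall b, lt b a -> family G) : family G :=
  fun A =>
    ((forall b, ~ lt b a) /\ F A) \/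
    ((exists b, lt b a) /\
     tau mul (fun B => exists b (Hb : lt b a), rec b Hb B) A).

Definition tau_iter {G O : Type} (mul : G -> G -> G) (F : family G)
  (lt : O -> O -> Prop) (wf : well_founded lt) : O -> family G :=
  Fix wf (fun _ => family G) (tau_iter_step mul F lt).

Definition is_succ {O : Type} (lt : O -> O -> Prop) (a b : O) :=
  lt a b /\ ~ (exists c, lt a c /\ lt c b).

(** A set in [tau^(a+1)(F)] that is a union [B ∪ zB] meets its translate
    [zB] in a set of [tau^a(F)]; since [zB] lies in that intersection and
    [tau^a(F)] is lower and left-invariant, [B = h(A)] itself lies in
    [tau^a(F)].  It remains to pull membership back along [h]: by induction
    on [a], if [x⁻¹y = g ∈ H] then [xA ∩ yA = x(A ∩ gA)] and
    [h(A ∩ gA) ⊂ h(A) ∩ h(g)h(A)], while if [x⁻¹y ∉ H] then [xA ∩ yA] is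
    empty because [A ⊂ H]. *)

From Stdlib Require Import Classical FunctionalExtensionality.

Section Tau.

Variables (G : Type) (mul : G -> G -> G) (e : G) (inv : G -> G).
Hypothesis Ggrp : is_group mul e inv.

Lemma mulA x y z : mul x (mul y z) = mul (mul x y) z.
Proof. exact (proj1 Ggrp x y z). Qed.

Lemma mul1g x : mul e x = x.
Proof. exact (proj1 (proj2 Ggrp) x). Qed.

Lemma mulg1 x : mul x e = x.
Proof. exact (proj1 (proj2 (proj2 Ggrp)) x). Qed.

Lemma mulVg x : mul (inv x) x = e.
Proof. exact (proj1 (proj2 (proj2 (proj2 Ggrp))) x). Qed.

Lemma mulgV x : mul x (inv x) = e.
Proof. exact (proj2 (proj2 (proj2 (proj2 Ggrp))) x). Qed.

Lemma mulIg w x y : mul x w = mul y w -> x = y.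
Proof.
  intro E. rewrite <- (mulg1 x), <- (mulg1 y), <- (mulgV w), !mulA, E.
  reflexivity.
Qed.

Lemma mulgI w x y : mul w x = mul w y -> x = y.
Proof.
  intro E. rewrite <- (mul1g x), <- (mul1g y), <- (mulVg w), <- !mulA, E.
  reflexivity.
Qed.

Lemma ltrans1_sup (A : set G) : subset A (ltrans mul e A).
Proof. intros a Ha. exists a. rewrite mul1g. auto. Qed.

Lemma ltransVK_sup (z : G) (A : set G) :
  subset A (ltrans mul (inv z) (ltrans mul z A)).
Proof.
  intros a Ha. exists (mul z a). split; [exists a; auto |].
  rewrite mulA, mulVg, mul1g. reflexivity.
Qed.

Lemma inter_ltrans_sub (x y : G) (A : set G) :
  subset (inter (ltrans mul x A) (ltrans mul y A))
         (ltrans mul x (inter A (ltrans mul (mul (inv x) y) A))).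
Proof.
  intros w [[a [Ha ->]] [b [Hb E]]]. exists a. repeat split; auto.
  exists b. split; auto.
  apply (mulgI x). rewrite E, !mulA, mulgV, mul1g. reflexivity.
Qed.

Lemma inter_ltrans_empty (H : set G) (x y w : G) (A : set G) :
  is_subgroup mul e inv H -> subset A H -> ~ H (mul (inv x) y) ->
  ~ inter (ltrans mul x A) (ltrans mul y A) w.
Proof.
  intros [_ [HM HV]] HA Hxy [[a [Ha Ea]] [b [Hb Eb]]]. apply Hxy.
  replace (mul (inv x) y) with (mul a (inv b)) by
    (apply (mulIg b); rewrite <- !mulA, mulVg, mulg1, <- Eb, Ea, mulA, mulVg,
       mul1g; reflexivity).
  auto.
Qed.

Lemma lower_ltrans_cancel (U : family G) (z : G) (C : set G) :
  lower U -> left_invariant mul U -> U (ltrans mul z C) -> U C.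
Proof. intros HU HL HzC. exact (HU _ _ (HL (inv z) _ HzC) (ltransVK_sup z C)). Qed.

Lemma tau_lower (U : family G) : lower U -> lower (tau mul U).
Proof.
  intros HU A B HA HBA x y Hxy. apply (HU _ _ (HA x y Hxy)).
  intros w [[a [Ha E1]] [b [Hb E2]]]. split; eexists; eauto.
Qed.

Lemma tau_left_invariant (U : family G) :
  lower U -> left_invariant mul (tau mul U).
Proof.
  intros HU w A HA x y Hxy.
  assert (Hxwy : mul x w <> mul y w) by (intro E; exact (Hxy (mulIg w x y E))).
  apply (HU _ _ (HA _ _ Hxwy)).
  intros v [[a1 [[a [Ha ->]] ->]] [a2 [[b [Hb ->]] E]]].
  split; [exists a | exists b]; split; rewrite <- ?mulA; auto.
Qed.

Lemma tau_sup (U : family G) (A : set G) :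
  lower U -> left_invariant mul U -> U A -> tau mul U A.
Proof.
  intros HU HL HA x y _.
  apply (HU (ltrans mul x A)); [exact (HL x A HA) | intros v [Hv _]; exact Hv].
Qed.

Section Iteration.

Variables (F : family G) (O : Type) (lt : O -> O -> Prop).
Variable wf : well_founded lt.
Hypotheses (Fl : left_invariant mul F) (Flow : lower F).

Local Notation T := (tau_iter mul F lt wf).

Definition tau_iter_below (a : O) : family G :=
  fun B => exists b (_ : lt b a), T b B.

Lemma tau_iter_unfold (a : O) (A : set G) :
  T a A <-> ((forall b, ~ lt b a) /\ F A) \/
            ((exists b, lt b a) /\ tau mul (tau_iter_below a) A).
Proof.
  unfold tau_iter at 1.
  rewrite (Fix_eq wf (fun _ => family G) (tau_iter_step mul F lt)); [apply iff_refl |].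
  intros c f g Hfg.
  replace g with f by (extensionality b; extensionality p; apply Hfg).
  reflexivity.
Qed.

Lemma tau_iter_lower_left_invariant (a : O) :
  lower (T a) /\ left_invariant mul (T a).
Proof.
  induction a as [a IH] using (well_founded_ind wf).
  assert (Hbelow : lower (tau_iter_below a)).
  { intros A B [b [Hb Tb]] HBA. exists b, Hb. exact (proj1 (IH b Hb) A B Tb HBA). }
  split.
  - intros A B HA HBA. apply tau_iter_unfold. apply tau_iter_unfold in HA.
    destruct HA as [[Hmin HF] | [Hpred Ht]].
    + left. split; [exact Hmin | exact (Flow A B HF HBA)].
    + right. split; [exact Hpred | exact (tau_lower _ Hbelow A B Ht HBA)].
  - intros x A HA. apply tau_iter_unfold. apply tau_iter_unfold in HA.
    destruct HA as [[Hmin HF] | [Hpred Ht]].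
    + left. split; [exact Hmin | exact (Fl x A HF)].
    + right. split; [exact Hpred | exact (tau_left_invariant _ Hbelow x A Ht)].
Qed.

Lemma tau_iter_lower (a : O) : lower (T a).
Proof. exact (proj1 (tau_iter_lower_left_invariant a)). Qed.

Lemma tau_iter_left_invariant (a : O) : left_invariant mul (T a).
Proof. exact (proj2 (tau_iter_lower_left_invariant a)). Qed.

Lemma tau_iter_below_lower (a : O) : lower (tau_iter_below a).
Proof.
  intros A B [b [Hb Tb]] HBA. exists b, Hb. exact (tau_iter_lower b A B Tb HBA).
Qed.

Lemma tau_iter_below_left_invariant (a : O) :
  left_invariant mul (tau_iter_below a).
Proof.
  intros x A [b [Hb Tb]]. exists b, Hb. exact (tau_iter_left_invariant b x A Tb).
Qed.

Lemma tau_iter_mono (a b : O) (A : set G) : lt b a -> T b A -> T a A.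
Proof.
  intros Hb Tb. apply tau_iter_unfold. right. split; [exists b; exact Hb |].
  apply tau_sup;
    [apply tau_iter_below_lower | apply tau_iter_below_left_invariant |].
  exists b, Hb. exact Tb.
Qed.

Lemma tau_iter_succ (a a1 : O) (A : set G) :
  (forall b c, lt b c \/ b = c \/ lt c b) -> is_succ lt a a1 ->
  T a1 A -> tau mul (T a) A.
Proof.
  intros Htot [Ha1 Hnone] HA x y Hxy.
  apply tau_iter_unfold in HA.
  destruct HA as [[Hmin _] | [_ Ht]]; [exfalso; exact (Hmin a Ha1) |].
  destruct (Ht x y Hxy) as [b [Hb Tb]].
  destruct (Htot b a) as [Hba | [-> | Hab]].
  - exact (tau_iter_mono a b _ Hba Tb).
  - exact Tb.
  - exfalso. apply Hnone. exists b. auto.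
Qed.

Section Transfer.

Variables (H K : set G) (h : G -> G).
Hypotheses (HH : is_subgroup mul e inv H) (Hh : is_iso_between mul H K h).

Lemma iso_morph1 : h e = e.
Proof.
  destruct HH as [He _]. destruct Hh as [_ [_ [_ hM]]].
  apply (mulgI (h e)). rewrite <- hM, !mul1g, mulg1; auto.
Qed.

Lemma iso_neq1 (g : G) : H g -> g <> e -> e <> h g.
Proof.
  destruct HH as [He _]. destruct Hh as [_ [hI _]].
  intros Hg Hge E. apply Hge, hI; auto. rewrite iso_morph1. auto.
Qed.

Lemma image_inter_ltrans_sub (g : G) (A : set G) :
  H g -> subset A H ->
  subset (image h (inter A (ltrans mul g A)))
         (inter (ltrans mul e (image h A)) (ltrans mul (h g) (image h A))).
Proof.
  destruct Hh as [_ [_ [_ hM]]].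
  intros Hg HA w [a [[Ha [b [Hb ->]]] <-]]. split.
  - apply ltrans1_sup. exists (mul g b). auto.
  - exists (h b). split; [exists b; auto | apply hM; auto].
Qed.

Lemma tau_image_transfer (U V : family G) (A : set G) :
  lower U -> left_invariant mul U -> lower V ->
  (forall B, subset B H -> V (image h B) -> U B) ->
  subset A H -> tau mul V (image h A) -> tau mul U A.
Proof.
  intros HU HLU HV Hpull HA Ht x y Hxy.
  destruct (classic (H (mul (inv x) y))) as [Hg | Hng].
  - set (g := mul (inv x) y) in *.
    assert (Hge : g <> e).
    { intro E. apply Hxy. apply (mulgI (inv x)). fold g. rewrite E, mulVg. auto. }
    assert (HAg : subset (inter A (ltrans mul g A)) H)
      by (intros w [Hw _]; auto).
    pose proof (HV _ _ (Ht e (h g) (iso_neq1 g Hg Hge))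
                  (image_inter_ltrans_sub g A Hg HA)) as HVimg.
    exact (HU _ _ (HLU x _ (Hpull _ HAg HVimg)) (inter_ltrans_sub x y A)).
  - assert (HUempty : U (fun _ => False)).
    { apply Hpull; [intros w [] |].
      apply (HV _ _ (Ht x y Hxy)). intros w [a [[] _]]. }
    apply (HU _ _ HUempty). intros w Hw.
    exact (inter_ltrans_empty H x y w A HH HA Hng Hw).
Qed.

Lemma tau_iter_image (a : O) (A : set G) :
  h_invariant H h F -> subset A H -> T a (image h A) -> T a A.
Proof.
  intro Fh. revert A. induction a as [a IH] using (well_founded_ind wf).
  intros A HA HT. apply tau_iter_unfold. apply tau_iter_unfold in HT.
  destruct HT as [[Hmin HF] | [Hpred Ht]].
  - left. split; [exact Hmin | exact (proj2 (Fh A HA) HF)].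
  - right. split; [exact Hpred |].
    apply (tau_image_transfer _ _ A (tau_iter_below_lower a)
             (tau_iter_below_left_invariant a) (tau_iter_below_lower a));
      [| exact HA | exact Ht].
    intros B HB [b [Hb Tb]]. exists b, Hb. exact (IH b Hb B HB Tb).
Qed.

End Transfer.

End Iteration.

End Tau.

Theorem lemma6p2
  (G : Type) (mul : G -> G -> G) (e : G) (inv : G -> G)
  (Ggrp : is_group mul e inv)
  (H K : set G) (HH : is_subgroup mul e inv H) (HK : is_subgroup mul e inv K)
  (h : G -> G) (Hh : is_iso_between mul H K h)
  (F : family G)
  (Fh : h_invariant H h F) (Fl : left_invariant mul F) (Flow : lower F)
  (O : Type) (lt : O -> O -> Prop) (wf : well_founded lt)
  (Owo : is_well_order lt)
  (alpha alpha1 : O) (Hsucc : is_succ lt alpha alpha1)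
  (A : set G) (HA : subset A H)
  (HnA : ~ tau_iter mul F lt wf alpha A) :
  forall z : G, z <> e ->
    ~ tau_iter mul F lt wf alpha1
        (union (image h A) (ltrans mul z (image h A))).
Proof.
  intros z Hz HT.
  set (B := union (image h A) (ltrans mul z (image h A))) in HT.
  pose proof (tau_iter_succ G mul e inv Ggrp F O lt wf Fl Flow alpha alpha1 B
                (proj2 (proj2 Owo)) Hsucc HT e z (not_eq_sym Hz)) as HBzB.
  assert (HzhA : tau_iter mul F lt wf alpha (ltrans mul z (image h A))).
  { apply (tau_iter_lower G mul e inv Ggrp F O lt wf Fl Flow alpha _ _ HBzB).
    intros w Hw. split.
    - apply (ltrans1_sup G mul e inv Ggrp). right. exact Hw.
    - destruct Hw as [b [Hb ->]]. exists b. split; [left |]; auto. }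
  apply HnA, (tau_iter_image G mul e inv Ggrp F O lt wf Fl Flow H K h HH Hh);
    [exact Fh | exact HA |].
  exact (lower_ltrans_cancel G mul e inv Ggrp _ z _
           (tau_iter_lower G mul e inv Ggrp F O lt wf Fl Flow alpha)
           (tau_iter_left_invariant G mul e inv Ggrp F O lt wf Fl Flow alpha)
           HzhA).
Qed.
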